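(* For every integer $n\ge 1$, $$m^*(n,3,2)=\min\Big\{m : \binom{m}{2}-K(m,2,3,1)\ge n\Big\}=\lceil 2\sqrt{n}\rceil.$$
   Context: For positive integers $s,u,v,e$, $K(s,u,v,e)$ is the smallest number of binary vectors of length $s$ and weight $u$ such that every binary vector of length $s$ and weight $v$ is at Hamming distance at most $e$ from at least one of them. For a binary matrix $M$ and a nonempty set $S$ of its columns, $S$ is a stopping set if the submatrix formed by $S$ has no row with exactly one $1$; $s(M)$ is the minimum size of a stopping set ($+\infty$ if none). $M$ is $(d,k)$-decodable if $s(M)\ge d+1$ and every column has exactly $k$ ones; $m^*(n,d,k)$ is the minimum $m$ such that an $m\times n$ $(d,k)$-decodable binary matrix exists. *)

From HB Require Import structures.
From mathcomp Require Import all_boot all_order all_algebra.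
From mathcomp Require Import Rstruct.
Set Implicit Arguments. Unset Strict Implicit. Unset Printing Implicit Defensive.
Import Order.TTheory GRing.Theory Num.Theory.

(* Binary vectors of length s are identified with their supports, subsets of 'I_s;
   weight = cardinality, Hamming distance = size of the symmetric difference. *)
Definition weight (s : nat) (x : {set 'I_s}) : nat := #|x|.
Definition hamming (s : nat) (x y : {set 'I_s}) : nat := #|(x :\: y) :|: (y :\: x)|.

Definition is_covering (s u v e : nat) (F : {set {set 'I_s}}) : bool :=
  [forall x in F, weight x == u] &&
  [forall y : {set 'I_s}, (weight y == v) ==> [exists x in F, hamming x y <= e]].

(* K(s,u,v,e): minimum size of a covering (the default value #|{set {set 'I_s}}| is
   only used when no covering exists, which does not happen for (u,v,e)=(2,3,1)). *)
Definition K (s u v e : nat) : nat :=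
  \big[minn/#|{set {set 'I_s}}|]_(F : {set {set 'I_s}} | is_covering u v e F) #|F|.

Definition stopping_set (m n : nat) (M : 'M[bool]_(m, n)) (S : {set 'I_n}) : bool :=
  (S != set0) && [forall i : 'I_m, #|[set j in S | M i j]| != 1].

(* s(M) >= d+1, i.e. every stopping set has size at least d+1 (vacuous if none). *)
Definition stopping_distance_ge (m n : nat) (M : 'M[bool]_(m, n)) (t : nat) : bool :=
  [forall S : {set 'I_n}, stopping_set M S ==> (t <= #|S|)].

Definition decodable (d k m n : nat) (M : 'M[bool]_(m, n)) : bool :=
  stopping_distance_ge M d.+1 && [forall j : 'I_n, #|[set i | M i j]| == k].

Definition is_least (P : nat -> Prop) (m : nat) : Prop :=
  P m /\ forall m', P m' -> m <= m'.

Definition is_mstar (n d k m : nat) : Prop :=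
  is_least (fun m' => exists M : 'M[bool]_(m', n), decodable d k M) m.

From mathcomp Require Import all_boot all_order all_algebra.
From mathcomp Require Import Rstruct.
From mathcomp Require Import zify.
Set Implicit Arguments. Unset Strict Implicit. Unset Printing Implicit Defensive.
Import Order.TTheory GRing.Theory Num.Theory.

(* All three quantities are governed by triangle-free graphs.  A graph on a
   finite vertex type is a set of 2-subsets (pairs); by Mantel's theorem a
   triangle-free graph on m vertices has at most floor(m^2/4) edges, and the
   complete bipartite graph with parts of sizes floor(m/2) and ceil(m/2)
   attains the bound.
   - Coverings: a family F of pairs covers every 3-set within Hamming
     distance 1 iff every 3-set contains a pair of F, i.e. iff the complement
     of F among all pairs is triangle-free; hence
     C(m,2) - K(m,2,3,1) = floor(m^2/4)  (covering_number).
   - Matrices: a matrix with columns of weight 2 is a multigraph on its rows,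
     and its stopping sets of size at most 3 come exactly from repeated
     columns and triangles; hence an m x n (3,2)-decodable matrix exists iff
     n <= floor(m^2/4)  (decodable_exists_iff).
   - Arithmetic: n <= floor(m^2/4) iff 2 sqrt n <= m, and the least natural
     number above a real x > -1 is ceil x.
   So all three numbers are the least m with n <= floor(m^2/4). *)

Lemma cards3 (T : finType) (a b c : T) :
  a != b -> b != c -> a != c -> #|[set a; b; c]| = 3.
Proof.
by move=> ab bc ac; rewrite -setUA cardsU1 cards2 bc !inE negb_or ab ac.
Qed.

Lemma cards3_le (T : finType) (a b c : T) : #|[set a; b; c]| <= 3.
Proof. by rewrite -setUA cardsU1 cards2; case: (_ \notin _); case: (b != c). Qed.

Lemma cards3P (T : finType) (y : {set T}) : #|y| = 3 ->
  exists a b c, [/\ a != b, b != c, a != c & y = [set a; b; c]].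
Proof.
move=> y3; have /card_gt2P [a [b [c [[ay byy cy] [ab bc ca]]]]] : 2 < #|y| by rewrite y3.
have ac : a != c by rewrite eq_sym.
exists a, b, c; split => //; apply/eqP; rewrite eq_sym eqEcard y3 cards3 // andbT.
by apply/subsetP => z; rewrite !inE -orbA => /or3P [] /eqP ->.
Qed.

Lemma subset_pair_eq (T : finType) (x : {set T}) (p q : T) :
  #|x| = 2 -> x \subset [set p; q] -> x = [set p; q].
Proof.
move=> x2 sx; apply/eqP; rewrite eqEcard sx cards2 x2.
by case: (p != q).
Qed.

Lemma pair_in_triple (T : finType) (x : {set T}) (a b c : T) :
  #|[set a; b; c]| = 3 -> #|x| = 2 -> x \subset [set a; b; c] ->
  [\/ x = [set a; b], x = [set b; c] | x = [set a; c]].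
Proof.
move=> abc3 x2 sx.
have sub2 p q r : r \notin x -> (forall z, z \in x -> [|| z == p, z == q | z == r]) ->
    x = [set p; q].
  move=> rx x_abc; apply: subset_pair_eq => //; apply/subsetP => z zx; rewrite !inE.
  by case/or3P: (x_abc z zx) => [->|->|/eqP ez]; rewrite ?orbT //; rewrite -ez zx in rx.
have x_abc z : z \in x -> [|| z == a, z == b | z == c].
  by move/(subsetP sx); rewrite !inE -orbA.
have [ax|ax] := boolP (a \in x); last first.
  by apply: Or32; apply: sub2 ax _ => z /x_abc /or3P [] ->; rewrite ?orbT.
have [bx|bx] := boolP (b \in x); last first.
  by apply: Or33; apply: sub2 bx _ => z /x_abc /or3P [] ->; rewrite ?orbT.
have [cx|cx] := boolP (c \in x); last by apply: Or31; exact: sub2 cx x_abc.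
have : [set a; b; c] \subset x.
  by apply/subsetP => z; rewrite !inE -orbA => /or3P [] /eqP ->.
by move/subset_leq_card; rewrite abc3 x2.
Qed.

Lemma set2_eq (T : finType) (x y a b : T) :
  [set x; y] = [set a; b] -> (x = a /\ y = b) \/ (x = b /\ y = a).
Proof.
move=> E.
have /set2P xab : x \in [set a; b] by rewrite -E set21.
have /set2P yab : y \in [set a; b] by rewrite -E set22.
have /set2P axy : a \in [set x; y] by rewrite E set21.
have /set2P bxy : b \in [set x; y] by rewrite E set22.
by case: xab yab axy bxy => -> [] -> [] ? [] ?; subst; auto.
Qed.

Lemma card_bigcup_le (T I : finType) (A : {pred I}) (F : I -> {set T}) :
  #|\bigcup_(i in A) F i| <= \sum_(i in A) #|F i|.
Proof.
elim/big_ind2: _ => [|X1 n1 X2 n2 le1 le2|//]; first by rewrite cards0.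
exact: leq_trans (leq_card_setU _ _) (leq_add le1 le2).
Qed.

(* Graphs on a finite type T are sets of pairs of vertices. *)
Definition pairs (T : finType) : {set {set T}} := [set f : {set T} | #|f| == 2].

Lemma card_pairs (T : finType) : #|pairs T| = 'C(#|T|, 2).
Proof. exact: card_draws. Qed.

Lemma pairs_neq (T : finType) (a b : T) : [set a; b] \in pairs T -> a != b.
Proof. by rewrite inE cards2; case: (a != b). Qed.

Definition triangle_free (T : finType) (E : {set {set T}}) : Prop :=
  forall a b c : T, [set a; b] \in E -> [set b; c] \in E -> [set a; c] \in E -> False.

Definition nbhd (T : finType) (E : {set {set T}}) (v : T) : {set T} :=
  [set y | [set v; y] \in E].

Lemma in_nbhd (T : finType) (E : {set {set T}}) (v y : T) :
  (y \in nbhd E v) = ([set v; y] \in E).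
Proof. by rewrite inE. Qed.

(* Mantel's theorem: pick x of maximal degree d; its neighbourhood is         *)
(* independent, so every edge has an end v outside N(x), and counting edges   *)
(* by such ends gives |E| <= (|T| - d) d <= |T|^2/4.                          *)
Theorem mantel (T : finType) (E : {set {set T}}) :
  E \subset pairs T -> triangle_free E -> #|E| <= #|T| * #|T| %/ 4.
Proof.
move=> Epairs tfE; pose N := nbhd E.
have [->|[f fE]] := set_0Vmem E; first by rewrite cards0.
have [v0 _] : exists v0 : T, v0 \in f.
  by apply/set0Pn; rewrite -cards_eq0; move/(subsetP Epairs): fE; rewrite inE => /eqP ->.
case: (@arg_maxnP _ v0 predT (fun v => #|N v|)) => // x _ maxx.
have cover : E \subset \bigcup_(v in ~: N x) [set [set v; y] | y in N v].
  apply/subsetP => g gE.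
  have /cards2P [p [q [_ gpq]]] : #|g| == 2 by move/(subsetP Epairs): gE; rewrite inE.
  subst g; have [px|px] := boolP (p \in N x).
  - have qx : q \in ~: N x.
      by rewrite inE; apply/negP; rewrite /N !in_nbhd in px * => qx; exact: tfE px gE qx.
    by apply/bigcupP; exists q; last by apply/imsetP; exists p; rewrite ?inE setUC.
  - by apply/bigcupP; exists p; [rewrite inE | apply/imsetP; exists q; rewrite ?in_nbhd].
apply: leq_trans (subset_leq_card cover) _; apply: leq_trans (card_bigcup_le _ _) _.
apply: (@leq_trans (\sum_(v in ~: N x) #|N x|)).
  by apply: leq_sum => v _; apply: leq_trans (leq_imset_card _ _) (maxx v _).
rewrite sum_nat_const -(cardsC (N x)) leq_divRL // mulnC mulnn addnC.
exact: nat_AGM2.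
Qed.

Definition bipartite (T : finType) (A : {set T}) : {set {set T}} :=
  [set [set p.1; p.2] | p in setX A (~: A)].

Lemma bipartite_cross (T : finType) (A : {set T}) (x y : T) :
  [set x; y] \in bipartite A -> (x \in A) != (y \in A).
Proof.
case/imsetP => [[a b]] /setXP [/= aA]; rewrite inE => bA.
by case/set2_eq => [[-> ->]|[-> ->]]; rewrite aA (negbTE bA).
Qed.

Lemma bipartite_pairs (T : finType) (A : {set T}) : bipartite A \subset pairs T.
Proof.
apply/subsetP => f /imsetP [[a b]] /setXP [/= aA]; rewrite inE => bA ->.
have ab : a != b by apply: contraNneq bA => <-.
by rewrite inE cards2 ab.
Qed.

(* A triangle would need three vertices pairwise on different sides. *)
Lemma bipartite_triangle_free (T : finType) (A : {set T}) :
  triangle_free (bipartite A).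
Proof.
move=> a b c /bipartite_cross + /bipartite_cross + /bipartite_cross.
by case: (a \in A); case: (b \in A); case: (c \in A).
Qed.

(* Distinct crossing pairs (a, b) give distinct edges. *)
Lemma card_bipartite (T : finType) (A : {set T}) :
  #|bipartite A| = #|A| * #|~: A|.
Proof.
rewrite card_in_imset ?cardsX // => -[a b] [a' b'] /setXP [/= aA _] /setXP [/= _].
rewrite inE => bA' /set2_eq [[-> ->] //|[ab' _]].
by rewrite -ab' aA in bA'.
Qed.

Definition lower_half (m : nat) : {set 'I_m} := [set i : 'I_m | i < m %/ 2].

(* lower_half m is the image of 'I_(m/2) in 'I_m. *)
Lemma card_lower_half (m : nat) : #|lower_half m| = m %/ 2.
Proof.
have le_half : m %/ 2 <= m by exact: leq_div.
have -> : lower_half m = [set widen_ord le_half j | j in setT].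
  apply/setP => i; rewrite !inE; apply/idP/imsetP => [ilt|[j _ ->]].
    by exists (Ordinal ilt) => //; apply/val_inj.
  by rewrite /= ltn_ord.
by rewrite card_imset ?cardsT ?card_ord // => i j /(congr1 val) ij; apply: val_inj.
Qed.

(* Sharpness of Mantel's bound. *)
Lemma card_bipartite_half (m : nat) : #|bipartite (lower_half m)| = m * m %/ 4.
Proof.
have := cardsC (lower_half m); rewrite card_bipartite card_ord card_lower_half => sizes.
have -> : #|~: lower_half m| = m - m %/ 2 by lia.
have := divn_eq m 2; have := ltn_pmod m (isT : 0 < 2).
move: (m %/ 2) (m %% 2) => k r r_lt2 ->.
apply/eqP; rewrite eqn_leq; apply/andP; split.
  by rewrite leq_divRL //; nia.
by rewrite -ltnS ltn_divLR //; nia.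
Qed.

Lemma hamming_pair_triple (m : nat) (x y : {set 'I_m}) :
  #|x| = 2 -> #|y| = 3 -> (hamming x y <= 1) = (x \subset y).
Proof.
move=> x2 y3; have := cardsID y x; have := cardsID x y; rewrite setIC x2 y3 => ex ey.
have [le_xy le_yx] : #|x :\: y| <= hamming x y /\ #|y :\: x| <= hamming x y.
  by split; apply: subset_leq_card; [apply: subsetUl | apply: subsetUr].
apply/idP/idP => [le1|sxy]; first by rewrite -setD_eq0 -cards_eq0; lia.
have xy0 : x :\: y = set0 by apply/eqP; rewrite setD_eq0.
by rewrite /hamming xy0 set0U; rewrite xy0 cards0 in ey; lia.
Qed.

(* A family of pairs covers every 3-set within distance 1 iff its complement  *)
(* among all pairs is triangle-free: a triangle {a,b,c} of the complement is  *)
(* exactly a 3-set containing no pair of the family.                          *)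
Lemma covering_iff (m : nat) (F : {set {set 'I_m}}) :
  is_covering 2 3 1 F <-> F \subset pairs 'I_m /\ triangle_free (pairs 'I_m :\: F).
Proof.
have weightF : [forall x in F, weight x == 2] = (F \subset pairs 'I_m).
  by apply/forall_inP/subsetP => Fw x /Fw; rewrite inE.
rewrite /is_covering weightF; split => [/andP [Fpairs /forallP covF]|[-> tfree]].
  split=> // a b c; rewrite !in_setD => /andP [abF /pairs_neq ab] /andP [bcF /pairs_neq bc]
    /andP [acF /pairs_neq ac].
  have abc3 := cards3 ab bc ac.
  have /existsP [x /andP [xF /= xy]] := implyP (covF [set a; b; c]) (introT eqP abc3).
  have x2 : #|x| = 2 by apply/eqP; move/(subsetP Fpairs): xF; rewrite inE.
  rewrite hamming_pair_triple // in xy.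
  by case: (pair_in_triple abc3 x2 xy) => ex; rewrite -ex xF in abF bcF acF.
apply/forallP => y; apply/implyP => /eqP /cards3P [a [b [c [ab bc ac ->]]]].
have abc3 := cards3 ab bc ac.
apply: contraT => /existsPn noF.
have side p q :
    p != q -> [set p; q] \subset [set a; b; c] -> [set p; q] \in pairs 'I_m :\: F.
  move=> pq sub; rewrite in_setD inE cards2 pq andbT.
  apply/negP => pqF; move: (noF [set p; q]).
  by rewrite pqF hamming_pair_triple ?cards2 ?pq ?sub.
suff : False by [].
apply: (tfree a b c); apply: side => //;
  by apply/subsetP => z; rewrite !inE => /orP [] ->; rewrite ?orbT.
Qed.

(* Singletons embed a finite type into its powerset. *)
Lemma card_le_card_set (T : finType) : #|T| <= #|{set T}|.
Proof. by rewrite -(card_imset _ (@set1_inj T)); exact: max_card. Qed.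

(* C(m,2) - K(m,2,3,1) is the maximal number of edges of a triangle-free      *)
(* graph on m vertices: complements of coverings are triangle-free (Mantel),  *)
(* and the complement of the balanced complete bipartite graph is a covering. *)
Theorem covering_number (m : nat) : 'C(m, 2) - K m 2 3 1 = m * m %/ 4.
Proof.
have bip_pairs := bipartite_pairs (lower_half m).
have le_quarter : m * m %/ 4 <= 'C(m, 2).
  rewrite -card_bipartite_half; apply: leq_trans (subset_leq_card bip_pairs) _.
  by rewrite card_pairs card_ord.
have cover0 : is_covering 2 3 1 (pairs 'I_m :\: bipartite (lower_half m)).
  apply/covering_iff; split; first exact: subsetDl.
  by rewrite setDDr setDv set0U (setIidPr bip_pairs); exact: bipartite_triangle_free.
have ub : K m 2 3 1 <= 'C(m, 2) - m * m %/ 4.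
  have Kle := bigmin_le_cond #|{set {set 'I_m}}| (fun F : {set {set 'I_m}} => #|F|) cover0.
  rewrite /K -minEnat; apply: leq_trans Kle _.
  by rewrite cardsD (setIidPr bip_pairs) card_pairs card_ord card_bipartite_half.
have lb : 'C(m, 2) - m * m %/ 4 <= K m 2 3 1.
  rewrite /K -minEnat; apply: (@le_bigmin _ nat) => [|F /covering_iff [Fpairs tfree]].
    apply: leq_trans (leq_subr _ _) _; rewrite -[m in 'C(m, 2)]card_ord -card_pairs.
    exact: leq_trans (max_card _) (card_le_card_set _).
  have := mantel (subsetDl _ F) tfree.
  by rewrite cardsD (setIidPr Fpairs) card_pairs !card_ord; lia.
lia.
Qed.

(* A binary matrix seen through its columns: column j is the set of rows i   *)
(* with M i j, so a column of weight 2 is an edge on the vertex set of rows.  *)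
Definition col_support (m n : nat) (M : 'M[bool]_(m, n)) (j : 'I_n) : {set 'I_m} :=
  [set i | M i j].

Definition column_graph (m n : nat) (M : 'M[bool]_(m, n)) : {set {set 'I_m}} :=
  [set col_support M j | j in [set: 'I_n]].

Lemma stopping_setP (m n : nat) (M : 'M[bool]_(m, n)) (S : {set 'I_n}) :
  stopping_set M S <->
  S != set0 /\
  forall i j, j \in S -> M i j -> exists2 j', j' \in S & (j' != j) && M i j'.
Proof.
split => [/andP [S0 /forallP rows]|[S0 twice]].
  split=> // i j jS Mij.
  have jrow : j \in [set j in S | M i j] by rewrite inE jS.
  case: (boolP ([set j in S | M i j] \subset [set j])) => [sub|/subsetPn [j' j'row j'j]].
    have /eqP := rows i; rewrite (_ : [set j in S | M i j] = [set j]) ?cards1 //.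
    by apply/eqP; rewrite eqEsubset sub sub1set.
  by rewrite inE in j'row; case/andP: j'row => j'S Mij'; exists j'; rewrite // -in_set1 j'j.
rewrite /stopping_set S0; apply/forallP => i; apply/negP => /cards1P [j row1].
have : j \in [set j in S | M i j] by rewrite row1 set11.
rewrite inE => /andP [jS Mij]; have [j' j'S /andP [j'j Mij']] := twice i j jS Mij.
have : j' \in [set j in S | M i j] by rewrite inE j'S.
by rewrite row1 inE (negbTE j'j).
Qed.

Section WeightTwoColumns.
Variables (m n : nat) (M : 'M[bool]_(m, n)).
Hypothesis col2 : forall j, #|col_support M j| = 2.
Local Notation c := (col_support M).

Lemma in_col i j : (i \in c j) = M i j.
Proof. by rewrite inE. Qed.

Lemma stopping_partner (S : {set 'I_n}) (j : 'I_n) (i : 'I_m) :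
  stopping_set M S -> j \in S -> i \in c j ->
  exists j' k, [/\ j' \in S, j' != j, k != i & c j' = [set i; k]].
Proof.
case/stopping_setP => _ twice jS; rewrite in_col => /(twice _ _ jS) [j' j'S /andP [j'j]].
rewrite -in_col => ij'; have /cards2P [p [q [pq cj']]] : #|c j'| == 2 by rewrite col2.
rewrite cj' in ij'; case/set2P: ij' => ei; subst i.
  by exists j', q; split; rewrite // eq_sym.
by exists j', p; rewrite setUC.
Qed.

(* Distinct triangle-free columns leave no stopping set of size at most 3:  *)
(* following partners from a column {a, b} in S produces three columns       *)
(* {a, b}, {a, x}, {b, y} which must exhaust S, and then x = y closes a      *)
(* triangle.                                                                  *)
Lemma stopping_ge4 :
  injective c -> triangle_free (column_graph M) -> stopping_distance_ge M 4.
Proof.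
move=> c_inj tfree; apply/forallP => S; apply/implyP => stopS.
rewrite leqNgt; apply/negP => small.
have [e eS] : exists e, e \in S by apply/set0Pn; case/andP: stopS.
have /cards2P [a [b [ab ce]]] : #|c e| == 2 by rewrite col2.
have [f [x [fS fe xa cf]]] : exists f x, [/\ f \in S, f != e, x != a & c f = [set a; x]].
  by apply: stopping_partner; rewrite // ce set21.
have [g [y [gS ge yb cg]]] : exists g y, [/\ g \in S, g != e, y != b & c g = [set b; y]].
  by apply: stopping_partner; rewrite // ce set22.
have xb : x != b by apply: contraNneq fe => xb; apply/eqP/c_inj; rewrite cf ce xb.
have gf : g != f.
  apply/eqP => gf; have : b \in c f by rewrite -gf cg set21.
  by rewrite cf => /set2P [] eb; [rewrite eb eqxx in ab | rewrite eb eqxx in xb].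
have S3 : S = [set e; f; g].
  apply/eqP; rewrite eq_sym eqEcard; apply/andP; split.
    by apply/subsetP => z; rewrite !inE -orbA => /or3P [] /eqP ->.
  by rewrite cards3 // 1?eq_sym //; rewrite ltnS in small.
have [h [z [hS hf _ ch]]] : exists h z, [/\ h \in S, h != f, z != x & c h = [set x; z]].
  by apply: stopping_partner; rewrite // cf set22.
move: hS hf ch; rewrite S3 !inE -orbA => /or3P [] /eqP ->; rewrite ?eqxx // => _ ch.
  have : x \in c e by rewrite ch set21.
  by rewrite ce => /set2P [] ex; [rewrite ex eqxx in xa | rewrite ex eqxx in xb].
have : x \in c g by rewrite ch set21.
rewrite cg => /set2P [] ex; first by rewrite ex eqxx in xb.
have inG j : c j \in column_graph M by apply: imset_f; rewrite inE.
by apply: (tfree a b x); rewrite -?ce -?cf ?ex -?cg inG.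
Qed.

(* Conversely, two equal columns, or three columns forming a triangle, are   *)
(* stopping sets of size at most 3.                                           *)
Lemma stopping_ge4_simple :
  stopping_distance_ge M 4 -> injective c /\ triangle_free (column_graph M).
Proof.
move=> /forallP ge4; split.
  move=> j1 j2 e; apply/eqP/negPn/negP => j12.
  suff : 4 <= #|[set j1; j2]| by rewrite cards2 j12.
  apply: (implyP (ge4 _)); apply/stopping_setP; split.
    by apply/set0Pn; exists j1; rewrite set21.
  move=> i j /set2P [] -> Mi.
    by exists j2; rewrite ?set22 // eq_sym j12 -in_col -e in_col.
  by exists j1; rewrite ?set21 // j12 -in_col e in_col.
move=> a b d /imsetP [j1 _ e1] /imsetP [j2 _ e2] /imsetP [j3 _ e3].
have ab : a != b by have := col2 j1; rewrite -e1 cards2; case: (_ != _).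
have bd : b != d by have := col2 j2; rewrite -e2 cards2; case: (_ != _).
have ad : a != d by have := col2 j3; rewrite -e3 cards2; case: (_ != _).
have col_neq j j' p : p \in c j -> p \notin c j' -> j != j'.
  by move=> pj; apply: contraNneq => <-.
have j12 : j1 != j2.
  by apply: (col_neq _ _ a); rewrite -?e1 -?e2 !inE ?eqxx // negb_or ab.
have j13 : j1 != j3.
  by apply: (col_neq _ _ b); rewrite -?e1 -?e3 !inE ?eqxx ?orbT // negb_or eq_sym ab bd.
have j23 : j2 != j3.
  by apply: (col_neq _ _ b); rewrite -?e2 -?e3 !inE ?eqxx // negb_or eq_sym ab bd.
have [j21 j31 j32] : [/\ j2 != j1, j3 != j1 & j3 != j2] by split; rewrite eq_sym.
suff : 4 <= #|[set j1; j2; j3]| by rewrite leqNgt ltnS cards3_le.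
apply: (implyP (ge4 _)); apply/stopping_setP; split.
  by apply/set0Pn; exists j1; rewrite !inE eqxx.
move=> i j; rewrite !inE -orbA -in_col => /or3P [] /eqP ->.
- rewrite -e1 => /set2P [] ->; [exists j3 | exists j2];
    by rewrite ?inE ?eqxx ?orbT // -in_col -?e2 -?e3 ?set21 ?set22 ?andbT.
- rewrite -e2 => /set2P [] ->; [exists j1 | exists j3];
    by rewrite ?inE ?eqxx ?orbT // -in_col -?e1 -?e3 ?set21 ?set22 ?andbT.
- rewrite -e3 => /set2P [] ->; [exists j1 | exists j2];
    by rewrite ?inE ?eqxx ?orbT // -in_col -?e1 -?e2 ?set21 ?set22 ?andbT.
Qed.

End WeightTwoColumns.

(* An m x n (3,2)-decodable matrix is a simple triangle-free graph with n    *)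
(* edges on m vertices, and such graphs exist iff n <= floor(m^2/4).          *)
Theorem decodable_exists_iff (m n : nat) :
  (exists M : 'M[bool]_(m, n), decodable 3 2 M) <-> n <= m * m %/ 4.
Proof.
split => [[M /andP [ge4 /forallP col2]]|n_le].
  have {}col2 j : #|col_support M j| = 2 by apply/eqP; exact: col2.
  have [c_inj tfree] := stopping_ge4_simple col2 ge4.
  have graph_pairs : column_graph M \subset pairs 'I_m.
    by apply/subsetP => f /imsetP [j _ ->]; rewrite inE col2.
  have := mantel graph_pairs tfree.
  by rewrite /column_graph card_imset // cardsT !card_ord.
pose s := enum (bipartite (lower_half m)).
have n_le_s : n <= size s by rewrite -cardE card_bipartite_half.
pose edge (j : 'I_n) := nth set0 s j.
have lt_s (j : 'I_n) : j < size s by exact: leq_trans (ltn_ord j) n_le_s.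
have edge_bip j : edge j \in bipartite (lower_half m) by rewrite -mem_enum mem_nth.
have edge_inj : injective edge.
  by move=> j1 j2 /eqP; rewrite nth_uniq ?enum_uniq // => /eqP /val_inj.
pose M : 'M[bool]_(m, n) := (\matrix_(i, j) (i \in edge j))%R.
have colM j : col_support M j = edge j by apply/setP => i; rewrite inE mxE.
have col2 j : #|col_support M j| = 2.
  by rewrite colM; apply/eqP; move/(subsetP (bipartite_pairs _)): (edge_bip j); rewrite inE.
exists M; apply/andP; split; last by apply/forallP => j; rewrite col2.
apply: stopping_ge4 => // [j1 j2|a b c]; first by rewrite !colM => /edge_inj.
have in_bip f : f \in column_graph M -> f \in bipartite (lower_half m).
  by case/imsetP => j _ ->; rewrite colM; exact: edge_bip.
by move=> /in_bip ab /in_bip bc /in_bip ac; exact: bipartite_triangle_free ab bc ac.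
Qed.

Section RealArithmetic.
Local Open Scope ring_scope.

Lemma le_quarter_square (R : rcfType) (n m : nat) :
  (n <= m * m %/ 4)%N = (2 * Num.sqrt (n%:R : R) <= m%:R).
Proof.
rewrite leq_divRL // -ler_sqr ?nnegrE ?ler0n ?mulr_ge0 ?sqrtr_ge0 //.
by rewrite exprMn sqr_sqrtr ?ler0n // -!natrX -natrM ler_nat mulnC mulnn.
Qed.

Lemma least_nat_ge_ceil (R : archiRealFieldType) (x : R) (m : nat) : -1 < x ->
  is_least (fun k : nat => x <= k%:R) m -> m%:Z = Num.ceil x.
Proof.
move=> x_gt [x_le least]; have : 0 <= Num.ceil x by rewrite ceil_ge0.
case: (Num.ceil x) (ceil_ge x) (ceil_le_int x) => // k x_le_k ceil_le _.
apply/eqP; rewrite eqz_nat eqn_leq least ?andbT; last exact: x_le_k.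
by rewrite -lez_nat ceil_le.
Qed.

End RealArithmetic.

Lemma is_least_ext (P Q : nat -> Prop) (m : nat) :
  (forall k, P k <-> Q k) -> is_least P m -> is_least Q m.
Proof. by move=> PQ [Pm least]; split => [|k /PQ]; [apply/PQ | apply: least]. Qed.

Theorem theorem6p3 (n : nat) : 1 <= n ->
  exists m : nat,
    is_mstar n 3 2 m /\
    is_least (fun m' => n <= 'C(m', 2) - K m' 2 3 1) m /\
    (m%:Z = Num.ceil (2 * Num.sqrt (n%:R : Rdefinitions.R)))%R.
Proof.
move=> _; pose P m := n <= m * m %/ 4.
have [m leastP] : exists m, is_least P m.
  have [|m Pm least] := @ex_minnP P; last by exists m.
  by exists (n * 2); rewrite /P mulnACA mulnK //; nia.
exists m; split; [|split].
- by apply: is_least_ext leastP => k; rewrite decodable_exists_iff.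
- by apply: is_least_ext leastP => k; rewrite covering_number.
- apply: least_nat_ge_ceil.
    by rewrite (@lt_le_trans _ _ 0%R) ?ltrN10 ?mulr_ge0 ?sqrtr_ge0.
  by apply: is_least_ext leastP => k; rewrite /P (le_quarter_square Rdefinitions.R).
Qed.
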